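(* Fix an integer $m\ge 1$ and $n\ge 0$. Let $\pi\in\Pi^{(m)}_n$ with label $L(\pi)=(a_1,a_2,\dots,a_m)$. Then exactly $a_m$ partitions of $[n+1]$ lying in $\Pi^{(m)}_{n+1}$ are obtained from $\pi$ by either adding $n+1$ as a singleton block or adding $n+1$ to an existing block of $\pi$: namely the partition obtained by adding $\{n+1\}$ as a singleton, and, for each $1\le l\le a_m-1$, the partition obtained by adding $n+1$ to block $l$ of $\pi$. Their labels are: \begin{itemize} \item adding $n+1$ as a singleton: $(a_1+1,a_2+1,\dots,a_m+1)$; \item adding $n+1$ to block $l$ with $1\le l\le a_1-1$: $(l+1,a_2,a_3,\dots,a_m)$; \item adding $n+1$ to block $l$ with $a_{j-1}\le l\le a_j-1$ for some $2\le j\le m$: $(a_1+1,\dots,a_{j-1}+1,\,l+1,\,a_{j+1},\dots,a_m)$. \end{itemize} (In particular, block $a_1$ gives $(a_1+1,a_1+1,a_3,\dots,a_m)$, block $a_2$ gives $(a_1+1,a_2+1,a_2+1,a_4,\dots,a_m)$, and block $a_m-1$ gives $(a_1+1,\dots,a_{m-1}+1,a_m)$.)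
   Context: A set partition of $[n]=\{1,\dots,n\}$ is a collection of nonempty pairwise disjoint blocks with union $[n]$ ($n=0$ gives the empty partition). Its standard representation is the graph on vertex set $[n]$ whose edges (arcs) $(i,j)$, $i<j$, join consecutive elements (in numerical order) of each block. An $m$-nesting is a set of $m$ arcs $(i_1,j_1),\dots,(i_m,j_m)$ with $i_1<i_2<\dots<i_m<j_m<j_{m-1}<\dots<j_1$ (a $1$-nesting is a single arc); a partition is $m$-nonnesting if it has no $m$-nesting. $\Pi^{(m)}_n$ denotes the set of partitions of $[n]$ with no $(m+1)$-nesting. The blocks of a partition are numbered $1,2,3,\dots$ in decreasing order of their maximal elements (block 1 contains the largest element). ''Adding $n+1$ to block $l$'' means forming the partition of $[n+1]$ in which block $l$ is replaced by block $l\cup\{n+1\}$. The label of $\pi\in\Pi^{(m)}_n$ is $L(\pi)=(a_1,\dots,a_m)$ where, for $1\le j\le m$, $a_j=1+$(number of blocks of $\pi$) if $\pi$ has no $j$-nesting, and otherwise $a_j=1+$(number of blocks whose maximal element lies to the right of (is greater than) the smallest vertex of the rightmost $j$-nesting), the rightmost $j$-nesting being one whose smallest vertex is as large as possible among all $j$-nestings of $\pi$. The empty partition has label $(1,\dots,1)$. *)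

(* Vertex i : 'I_n represents the integer i+1 of [n]. *)
From mathcomp Require Import all_boot all_order.
Set Implicit Arguments. Unset Strict Implicit. Unset Printing Implicit Defensive.

Section SetPartitions.
Variable n : nat.
Implicit Types (P : {set {set 'I_n}}) (B : {set 'I_n}).

Definition setpart P : bool := partition P [set: 'I_n].

Definition arcb P (a : 'I_n * 'I_n) : bool :=
  (a.1 < a.2) &&
  [exists B in P, [&& a.1 \in B, a.2 \in B &
                     [forall k in B, ~~ ((a.1 < k) && (k < a.2))]]].

Definition nestrel (a b : 'I_n * 'I_n) : bool := (a.1 < b.1) && (b.2 < a.2).

Definition nestingb P (s : seq ('I_n * 'I_n)) : bool :=
  all (arcb P) s && sorted nestrel s.

Definition has_nesting P (j : nat) : bool :=
  [exists t : j.-tuple ('I_n * 'I_n), nestingb P t].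

Definition nest_start P (j : nat) (i : 'I_n) : bool :=
  [exists t : j.-tuple ('I_n * 'I_n), nestingb P t && ((head (i, i) t).1 == i)].

Definition maxB B : nat := \max_(i in B) (i : nat).

Definition PiM (m : nat) P : bool := setpart P && ~~ has_nesting P m.+1.

Definition lab P (j : nat) : nat :=
  if has_nesting P j then
    let s := \max_(i : 'I_n | nest_start P j i) (i : nat) in
    1 + #|[set B in P | s < maxB B]|
  else 1 + #|P|.

Definition label (m : nat) P : seq nat := [seq lab P j | j <- iota 1 m].

(* blocks numbered 1,2,... by decreasing maximal element *)
Definition blockrank P B : nat := #|[set C in P | maxB B <= maxB C]|.

Definition liftB B : {set 'I_n.+1} := widen_ord (leqnSn n) @: B.

Definition add_single P : {set {set 'I_n.+1}} :=
  [set (@ord_max n)] |: [set liftB B | B in P].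

Definition add_to P (l : nat) : {set {set 'I_n.+1}} :=
  [set (if blockrank P B == l then (@ord_max n) |: liftB B else liftB B) | B in P].

Definition children P : {set {set {set 'I_n.+1}}} :=
  add_single P |: [set add_to P l | l : 'I_n.+1 & (1 <= l) && (l <= #|P|)].

End SetPartitions.

From mathcomp Require Import all_boot all_order.
From mathcomp Require Import zify.
Set Implicit Arguments. Unset Strict Implicit. Unset Printing Implicit Defensive.

(* Adding n+1 to the block of rank l, with maximum b, creates exactly one new
   arc (b, n+1): its right end exceeds all others and no arc starts at b.  So
   the j-nestings of the new partition are the old ones together with (b, n+1)
   put in front of a (j-1)-nesting starting right of b, and the rightmost start
   of a j-nesting either stays or becomes b.  The number of blocks whose maximum
   exceeds x grows by one exactly for x >= b, and is at least l exactly for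
   x < b.  Comparing with a_(j-1) and a_j yields the new labels; in particular
   an (m+1)-nesting appears iff a_m <= l.  A new singleton creates no arc and
   raises every count by one. *)

Definition nests (x y : nat * nat) : bool := (x.1 < y.1) && (y.2 < x.2).

Lemma nests_trans : transitive nests.
Proof. by move=> y x z /andP[? ?] /andP[? ?]; apply/andP; split; lia. Qed.

Implicit Types (A : pred (nat * nat)) (j x b c : nat).

Definition starts_nesting A j x : Prop :=
  exists s : seq (nat * nat),
    [/\ size s = j, all A s, sorted nests s & (head (0, 0) s).1 = x].

Lemma starts_nesting_arc A j x :
  0 < j -> starts_nesting A j x -> exists2 y, A y & y.1 = x.
Proof.
move=> hj [[|y s] [hs]]; first by rewrite -hs in hj.
by move=> /= /andP[hy _] _ <-; exists y.
Qed.

Lemma starts_nesting_tail A j x :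
  1 < j -> starts_nesting A j x -> exists2 y, x < y & starts_nesting A j.-1 y.
Proof.
move=> hj [[|y [|y' s]] [hs]]; try by rewrite -hs in hj.
move=> /= /and3P[_ hy' hsA] /andP[/andP[hyy' _] hsorted] <-.
by exists y'.1 => //; exists (y' :: s); rewrite /= hy' hsA -hs.
Qed.

Lemma eq_starts_nesting A A' j x :
  A =1 A' -> starts_nesting A j x <-> starts_nesting A' j x.
Proof.
by move=> eA; split=> -[s [? hA ? ?]]; exists s; split; rewrite // ?(eq_all eA) // -(eq_all eA).
Qed.

(* An arc with left end [b] and a right end beyond all arcs of [A] can be put
   in front of some [(j-1)]-nesting of [A]. *)
Definition prefixable A b j : Prop :=
  j = 1 \/ exists2 y, b < y & starts_nesting A j.-1 y.

Lemma starts_nesting_add_arc A A' b c j x :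
  (forall y, A y -> y.2 < c) -> (forall y, A' y = A y || (y == (b, c))) -> 0 < j ->
  starts_nesting A' j x <-> starts_nesting A j x \/ (x = b /\ prefixable A b j).
Proof.
move=> hAc hA' hj; split.
- move=> [[|y s] [hs]]; first by rewrite -hs in hj.
  move=> /= /andP[hy hsA'] hsorted hx.
  have hyc : y.2 <= c by move: hy; rewrite hA' => /orP[/hAc|/eqP->] /=; lia.
  have hsA : all A s.
    apply/allP => z zs; move: (allP hsA' z zs); rewrite hA' => /orP[//|/eqP ez].
    by move: (allP (order_path_min nests_trans hsorted) z zs); rewrite ez /nests /=; lia.
  move: hy; rewrite hA' => /orP[hy|/eqP ey].
    by left; exists (y :: s); rewrite /= hy hsA.
  right; split; first by rewrite -hx ey.
  case: s hs hsorted hsA {hsA'} => [|y' s] hs hsorted hsA; first by left; rewrite -hs.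
  move: hsorted => /= /andP[/andP[hyy' _] hsorted].
  right; exists y'.1; first by rewrite ey in hyy'.
  by exists (y' :: s); split; rewrite // -hs.
- have hbc : A' (b, c) by rewrite hA' eqxx orbT.
  have AA' : forall s, all A s -> all A' s.
    by move=> s /allP hs; apply/allP => z /hs; rewrite hA' => ->.
  move=> [[s [? /AA' ? ? ?]]|[-> [->|[y hy [s [hs hsA hsorted hx]]]]]].
  + by exists s.
  + by exists [:: (b, c)]; rewrite /= hbc.
  + exists ((b, c) :: s); split; rewrite /= ?hbc ?AA' //; first by lia.
    case: s {hs} hsA hsorted hx => [|y' s] //= /andP[hy' _] -> hx.
    by rewrite /nests /= hx hy hAc.
Qed.

(* [label_spec A above N j v]: [v] is the label entry [a_j] of a partition with
   arcs [A], [N] blocks, and [above x] blocks whose maximum exceeds [x]. *)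
Definition label_spec A (above : nat -> nat) (N j v : nat) : Prop :=
  (exists x, [/\ starts_nesting A j x, forall y, starts_nesting A j y -> y <= x
               & v = (above x).+1])
  \/ ((forall x, ~ starts_nesting A j x) /\ v = N.+1).

Lemma label_spec_uniq A above N j v w :
  label_spec A above N j v -> label_spec A above N j w -> v = w.
Proof.
move=> [[x [hx hmx ->]]|[hn ->]] [[y [hy hmy ->]]|[hn' ->]] //.
- by have -> : x = y by apply/eqP; rewrite eqn_leq hmx // hmy.
- by case: (hn' x).
- by case: (hn y).
Qed.

Lemma eq_label_spec A A' above N j v :
  A =1 A' -> label_spec A above N j v -> label_spec A' above N j v.
Proof.
move=> /eq_starts_nesting eA [[x [/eA hx hmx ->]]|[hn ->]].
- by left; exists x; split => // y /eA /hmx.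
- by right; split => // x /eA /hn.
Qed.

Lemma label_spec_succ A above above' N c j v :
  (forall y, A y -> y.1 < c) -> (forall x, x < c -> above' x = (above x).+1) ->
  0 < j -> label_spec A above N j v -> label_spec A above' N.+1 j v.+1.
Proof.
move=> hAc habove hj [[x [hx hmx ->]]|[hn ->]]; last by right.
have [y /hAc + hyx] := starts_nesting_arc hj hx; rewrite hyx => hxc.
by left; exists x; rewrite habove.
Qed.

Lemma label_spec_mono A above N j v v' :
  {homo above : x y /~ x <= y} -> (forall x, above x <= N) -> 1 < j ->
  label_spec A above N j v -> label_spec A above N j.-1 v' -> v' <= v.
Proof.
move=> hmono hN hj [[x [hx _ ->]]|[_ ->]] [[x' [_ hmx' ->]]|[hn' ->]].
- by have [y hxy /hmx' hyx'] := starts_nesting_tail hj hx; rewrite ltnS hmono //; lia.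
- by have [y _ /hn'] := starts_nesting_tail hj hx.
- by rewrite ltnS.
- by [].
Qed.

(* The hypotheses describe adding to a partition with arcs [A] the arc
   [(b, c)], where [b] is the maximum of the block of rank [l]. *)
Section AddArc.
Variables (A A' : pred (nat * nat)) (above above' : nat -> nat) (N b c l : nat).
Hypothesis arcs_below : forall y, A y -> y.1 < y.2 < c.
Hypothesis no_arc_from_b : forall y, A y -> y.1 != b.
Hypothesis arcs_add : forall y, A' y = A y || (y == (b, c)).
Hypothesis b_lt_c : b < c.
Hypothesis above_add : forall x, x < c -> above' x = above x + (b <= x).
Hypothesis rank_above : forall x, (l <= above x) = (x < b).
Hypothesis above_b : above b = l.-1.
Hypothesis l_gt0 : 0 < l.
Hypothesis l_le_N : l <= N.

Lemma above_lt_rank x : (above x < l) = (b <= x).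
Proof. by rewrite ltnNge rank_above -leqNgt. Qed.

Lemma above'_b : above' b = l.
Proof. by rewrite above_add // leqnn above_b addn1 prednK. Qed.

Lemma start_bounds j x : 0 < j -> starts_nesting A j x -> x < c /\ x != b.
Proof.
move=> hj /(starts_nesting_arc hj) [y hy <-].
by split; [have := arcs_below hy; lia | exact: no_arc_from_b].
Qed.

Lemma starts_add_arc j x : 0 < j ->
  starts_nesting A' j x <-> starts_nesting A j x \/ (x = b /\ prefixable A b j).
Proof.
by apply: starts_nesting_add_arc => // y /arcs_below /andP[].
Qed.

Lemma prefixable_label j v : 1 < j -> label_spec A above N j.-1 v ->
  prefixable A b j <-> v <= l.
Proof.
move=> hj [[x [hx hmx ->]]|[hn ->]].
- have [_ xb] := start_bounds (ltac:(lia) : 0 < j.-1) hx.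
  rewrite above_lt_rank leq_eqVlt eq_sym (negbTE xb).
  split => [[|[y hy /hmx]]|hbx]; [lia | lia | by right; exists x].
- by split => [[|[y _ /hn]]|] //; lia.
Qed.

Lemma label_spec_add_arc_prefixable j v : 0 < j -> prefixable A b j ->
  label_spec A above N j v -> label_spec A' above' N j (minn v l).+1.
Proof.
move=> hj hpre [[x [hx hmx ->]]|[hn ->]].
- have [xc xb] := start_bounds hj hx.
  case: (ltngtP x b) => hxb; last by rewrite hxb eqxx in xb.
  + left; exists b; split; first by apply/(starts_add_arc _ hj); right.
    * by move=> y /(starts_add_arc _ hj) [/hmx|[->]]; lia.
    * by have := rank_above x; rewrite above'_b hxb; lia.
  + left; exists x; split; first by apply/(starts_add_arc _ hj); left.
    * by move=> y /(starts_add_arc _ hj) [/hmx|[->]]; lia.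
    * by have := above_lt_rank x; rewrite above_add // (ltnW hxb); lia.
- left; exists b; split; first by apply/(starts_add_arc _ hj); right.
  + by move=> y /(starts_add_arc _ hj) [/hn|[->]].
  + by rewrite above'_b; lia.
Qed.

Lemma label_spec_add_arc_unprefixable j v : 0 < j -> ~ prefixable A b j ->
  label_spec A above N j v -> label_spec A' above' N j v.
Proof.
move=> hj hpre [[x [hx hmx ->]]|[hn ->]].
- have [xc xb] := start_bounds hj hx.
  have hxb : x < b.
    rewrite ltn_neqAle xb leqNgt; apply/negP => hbx; apply: hpre.
    case: (ltngtP j 1) => [|hj1|->]; [lia | right | by left].
    by have [y hxy hy] := starts_nesting_tail hj1 hx; exists y => //; lia.
  left; exists x; split; first by apply/(starts_add_arc _ hj); left.
  + by move=> y /(starts_add_arc _ hj) [/hmx|[_ /hpre]].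
  + by rewrite above_add // leqNgt hxb addn0.
- by right; split => // y /(starts_add_arc _ hj) [/hn|[_ /hpre]].
Qed.

Lemma label_spec_add_arc j v v' : 0 < j -> label_spec A above N j v ->
  (1 < j -> label_spec A above N j.-1 v') ->
  label_spec A' above' N j (if (j == 1) || (v' <= l) then (minn v l).+1 else v).
Proof.
move=> hj hv hv'.
have hpre : prefixable A b j <-> (j == 1) || (v' <= l).
  case: (eqVneq j 1) => [->|hj1] /=; first by split => // _; left.
  by apply: prefixable_label; [lia | apply: hv'; lia].
case: ifP => hcond.
- by apply: label_spec_add_arc_prefixable => //; apply/hpre.
- by apply: label_spec_add_arc_unprefixable => // /hpre; rewrite hcond.
Qed.

Lemma has_nesting_add_arc m v : 0 < m -> (forall x, ~ starts_nesting A m.+1 x) ->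
  label_spec A above N m v -> (exists x, starts_nesting A' m.+1 x) <-> v <= l.
Proof.
move=> hm hn /(prefixable_label (ltac:(lia) : 1 < m.+1)) hpre.
split => [[x /(starts_add_arc _ (ltn0Sn m)) [/hn|[_ /hpre]]] //|/hpre hp].
by exists b; apply/(starts_add_arc _ (ltn0Sn m)); right.
Qed.

End AddArc.

Section NatArcs.
Variable k : nat.
Implicit Types (P : {set {set 'I_k}}) (t : seq ('I_k * 'I_k)).

Definition nat_arc (a : 'I_k * 'I_k) : nat * nat := (val a.1, val a.2).

Definition nat_arcs P : pred (nat * nat) :=
  fun y => [exists a, arcb P a && (nat_arc a == y)].

Definition blocks_above P x : nat := #|[set B in P | x < maxB B]|.

Lemma nat_arc_inj : injective nat_arc.
Proof. by move=> [u v] [u' v'] [/val_inj -> /val_inj ->]. Qed.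

Lemma nat_arcsE P a : nat_arcs P (nat_arc a) = arcb P a.
Proof.
apply/existsP/idP => [[a' /andP[ha' /eqP /nat_arc_inj <-]] //|ha].
by exists a; rewrite ha eqxx.
Qed.

Lemma nat_arcs_lt P y : nat_arcs P y -> y.1 < y.2 < k.
Proof. by move=> /existsP[[u v] /andP[/andP[/= huv _] /eqP <-]]; rewrite /= huv ltn_ord. Qed.

Lemma nat_arcs_lift P s : all (nat_arcs P) s -> exists t, s = map nat_arc t.
Proof.
elim: s => [|y s IH] /=; first by exists [::].
move=> /andP[/existsP[a /andP[_ /eqP <-]] /IH[t ->]].
by exists (a :: t).
Qed.

Lemma head_nat_arc t d : 0 < size t -> (head (0, 0) (map nat_arc t)).1 = (head d t).1.
Proof. by case: t. Qed.

Lemma starts_nesting_nat P j x : starts_nesting (nat_arcs P) j x <->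
  exists t, [/\ size t = j, nestingb P t & (head (0, 0) (map nat_arc t)).1 = x].
Proof.
have allE t : all (nat_arcs P) (map nat_arc t) = all (arcb P) t.
  by rewrite all_map; apply: eq_all => a; apply: nat_arcsE.
split => [[s [hs hall hsorted hx]]|[t [ht /andP[hall hsorted] hx]]].
- have [t est] := nat_arcs_lift hall; subst s.
  move: hs hall hsorted; rewrite size_map allE sorted_map => hs hall hsorted.
  by exists t; split => //; apply/andP.
- by exists (map nat_arc t); rewrite size_map allE sorted_map.
Qed.

Lemma has_nestingP P j :
  reflect (exists x, starts_nesting (nat_arcs P) j x) (has_nesting P j).
Proof.
apply: (iffP existsP) => [[t ht]|[x /starts_nesting_nat [t [hs ht _]]]].
- by exists (head (0, 0) (map nat_arc t)).1; apply/starts_nesting_nat; exists t; rewrite size_tuple.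
- have st : size t == j by apply/eqP.
  by exists (Tuple st).
Qed.

Lemma nest_startP P j (i : 'I_k) : 0 < j ->
  reflect (starts_nesting (nat_arcs P) j i) (nest_start P j i).
Proof.
move=> hj; apply: (iffP existsP) => [[t /andP[ht /eqP hi]]|/starts_nesting_nat [t [hs ht hx]]].
- apply/starts_nesting_nat; exists t; rewrite size_tuple.
  by rewrite (head_nat_arc (i, i)) ?size_tuple // hi.
- have st : size t == j by apply/eqP.
  exists (Tuple st); rewrite ht /=; apply/eqP/ord_inj.
  by rewrite -hx (head_nat_arc (i, i)) // hs.
Qed.

Lemma starts_nesting_lt P j x : 0 < j -> starts_nesting (nat_arcs P) j x -> x < k.
Proof. by move=> hj /(starts_nesting_arc hj) [y /nat_arcs_lt + <-]; lia. Qed.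

Lemma label_specP P j : 0 < j -> label_spec (nat_arcs P) (blocks_above P) #|P| j (lab P j).
Proof.
move=> hj; rewrite /lab; case: has_nestingP => [[x0 hx0]|hn]; last first.
  by right; split => [x hx|]; [apply: hn; exists x | rewrite add1n].
left.
have hc : 0 < #|(fun i : 'I_k => nest_start P j i)|.
  apply/card_gt0P; exists (Ordinal (starts_nesting_lt hj hx0)).
  by rewrite unfold_in; apply/nest_startP.
have [i0 hi0 heq] := eq_bigmax_cond (fun i : 'I_k => i : nat) hc.
exists i0; split.
- by apply/nest_startP => //; move: hi0; rewrite unfold_in.
- move=> y hy; rewrite -heq.
  by apply: (@leq_bigmax_cond _ _ (fun i : 'I_k => i : nat) (Ordinal (starts_nesting_lt hj hy))); apply/nest_startP.
- by rewrite heq add1n.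
Qed.

End NatArcs.

Section MaxBlock.
Variable n : nat.
Implicit Types B : {set 'I_n}.

Lemma leq_maxB B i : i \in B -> i <= maxB B.
Proof. exact: (@leq_bigmax_cond _ (mem B) (fun i : 'I_n => i : nat)). Qed.

Lemma maxB_mem B : B != set0 -> exists2 i, i \in B & (i : nat) = maxB B.
Proof.
rewrite -card_gt0 => hB.
by rewrite /maxB; have [i hi ->] := eq_bigmax_cond (fun i : 'I_n => i : nat) hB; exists i.
Qed.

Lemma maxB_le B : maxB B <= n.
Proof. by apply/bigmax_leqP => i _; apply: ltnW. Qed.

Lemma maxB0 : maxB (set0 : {set 'I_n}) = 0.
Proof. by apply/eqP; rewrite -leqn0; apply/bigmax_leqP => i; rewrite inE. Qed.

End MaxBlock.

Section Partition.
Variables (n : nat) (P : {set {set 'I_n}}).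
Lemma blocks_above_le x : blocks_above P x <= #|P|.
Proof. by apply: subset_leq_card; apply/subsetP => B; rewrite inE => /andP[]. Qed.

Lemma blocks_above_mono : {homo blocks_above P : x y /~ x <= y}.
Proof.
move=> x y xy; apply: subset_leq_card; apply/subsetP => B; rewrite !inE.
by case/andP => -> /=; lia.
Qed.

Lemma blockrank_le B : blockrank P B <= #|P|.
Proof. by apply: subset_leq_card; apply/subsetP => C; rewrite inE => /andP[]. Qed.

Hypothesis partP : setpart P.

Lemma setpart_trivI : trivIset P.
Proof. by case/and3P: partP. Qed.

Lemma block_neq0 B : B \in P -> B != set0.
Proof. by case/and3P: partP => _ _ P0 hB; apply: contraNneq P0 => <-. Qed.

Lemma block_eq B C i : B \in P -> C \in P -> i \in B -> i \in C -> B = C.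
Proof.
move=> hB hC hiB hiC.
by rewrite -(def_pblock setpart_trivI hB hiB) -(def_pblock setpart_trivI hC hiC).
Qed.

Lemma maxB_lt B : B \in P -> maxB B < n.
Proof. by move=> /block_neq0 /maxB_mem [i _ <-]. Qed.

Lemma maxB_inj : {in P &, injective (@maxB n)}.
Proof.
move=> B C hB hC eBC.
have [i hi ei] := maxB_mem (block_neq0 hB); have [i' hi' ei'] := maxB_mem (block_neq0 hC).
have ii' : i = i' by apply: ord_inj; rewrite ei ei'.
by apply: (block_eq hB hC hi); rewrite ii'.
Qed.

Lemma card_setpart_le : #|P| <= n.
Proof.
rewrite -[X in _ <= X]card_ord -cardsT (card_partition partP) -sum1_card.
by apply: leq_sum => B /block_neq0; rewrite lt0n cards_eq0.
Qed.

Lemma blockrank_gt0 B : B \in P -> 0 < blockrank P B.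
Proof. by move=> hB; apply/card_gt0P; exists B; rewrite inE hB leqnn. Qed.

Lemma blockrank_lt B C :
  B \in P -> C \in P -> maxB B < maxB C -> blockrank P C < blockrank P B.
Proof.
move=> hB hC hBC; apply: proper_card; rewrite properE; apply/andP; split.
- by apply/subsetP => D; rewrite !inE => /andP[-> /=]; lia.
- by apply/subsetP => /(_ B); rewrite !inE hB leqnn => /(_ isT); lia.
Qed.

Lemma blockrank_inj : {in P &, injective (blockrank P)}.
Proof.
move=> B C hB hC eBC; case: (ltngtP (maxB B) (maxB C)) => hBC.
- by have := blockrank_lt hB hC hBC; rewrite eBC ltnn.
- by have := blockrank_lt hC hB hBC; rewrite eBC ltnn.
- exact: maxB_inj.
Qed.

Lemma blockrank_onto l : 1 <= l <= #|P| -> exists2 B, B \in P & blockrank P B = l.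
Proof.
move=> hl.
have uniq_ranks : uniq (map (blockrank P) (enum P)).
  by rewrite map_inj_in_uniq ?enum_uniq // => B C; rewrite !mem_enum; apply: blockrank_inj.
have sub_ranks : {subset map (blockrank P) (enum P) <= iota 1 #|P|}.
  move=> r /mapP[B]; rewrite mem_enum mem_iota => hB ->.
  by have := blockrank_gt0 hB; have := blockrank_le B; lia.
have [_ eq_ranks] := uniq_min_size uniq_ranks sub_ranks
  (ltac:(by rewrite size_iota size_map -cardE)).
have : l \in iota 1 #|P| by rewrite mem_iota; lia.
by rewrite -eq_ranks => /mapP[B]; rewrite mem_enum => hB ->; exists B.
Qed.

Lemma nat_arcs_not_from_maxB B0 y : B0 \in P -> nat_arcs P y -> y.1 != maxB B0.
Proof.
move=> hB0 /existsP[[u v] /andP[/andP[/= huv /existsP[B /and4P[hB hu hv _]]] /eqP <-]] /=.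
apply/eqP => eu; have [z hz ez] := maxB_mem (block_neq0 hB0).
have uz : u = z by apply: ord_inj; rewrite eu ez.
subst z; rewrite (block_eq hB hB0 hu hz) in hv.
by have := leq_maxB hv; lia.
Qed.

Section Rank.
Variables (B0 : {set 'I_n}) (l : nat).
Hypotheses (hB0 : B0 \in P) (rankB0 : blockrank P B0 = l).

Lemma rank_le_blocks_above x : (l <= blocks_above P x) = (x < maxB B0).
Proof.
rewrite -rankB0; apply/idP/idP => [|hx]; last first.
  by apply: subset_leq_card; apply/subsetP => C; rewrite !inE => /andP[-> /=]; lia.
rewrite ltnNge; apply: contraL => hx; rewrite -ltnNge.
rewrite /blockrank (cardsD1 B0) inE hB0 leqnn /= ltnS.
apply: subset_leq_card; apply/subsetP => C; rewrite !inE => /andP[hC hxC].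
rewrite hC (leq_trans hx (ltnW hxC)) !andbT.
by apply: contraTneq hxC => ->; rewrite -leqNgt.
Qed.

Lemma blocks_above_maxB : blocks_above P (maxB B0) = l.-1.
Proof.
rewrite -rankB0 /blockrank (cardsD1 B0) inE hB0 leqnn /=.
apply: eq_card => C; rewrite !inE.
case: (eqVneq C B0) => [->|hne] /=; first by rewrite ltnn andbF.
case hC: (C \in P) => //=; rewrite ltn_neqAle.
by case: (eqVneq (maxB B0) (maxB C)) => // e; case/eqP: hne; apply: maxB_inj.
Qed.

End Rank.
End Partition.

Section Extend.
Variable n : nat.
Implicit Types (B : {set 'I_n}) (i : 'I_n).
Local Notation widen := (widen_ord (leqnSn n)).

Lemma widen_inj : injective widen.
Proof. by move=> i i' e; apply: ord_inj; apply: (congr1 (@nat_of_ord _) e). Qed.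

Lemma ord_max_or_widen (i : 'I_n.+1) : i = ord_max \/ exists i', i = widen i'.
Proof.
case: (ltngtP i n) => hi; last by left; apply: ord_inj.
- by right; exists (Ordinal hi); apply: ord_inj.
- by have := ltn_ord i; lia.
Qed.

Lemma mem_liftB B i : (widen i \in liftB B) = (i \in B).
Proof. exact: mem_imset widen_inj. Qed.

Lemma ord_max_notin_liftB B : ord_max \notin liftB B.
Proof. by apply/imsetP => -[i _ /(congr1 val) /= ni]; have := ltn_ord i; lia. Qed.

Lemma maxB_liftB B : maxB (liftB B) = maxB B.
Proof. by rewrite /maxB big_imset //= => i i' _ _ /widen_inj. Qed.

Definition extendB (B1 B : {set 'I_n}) : {set 'I_n.+1} :=
  if B == B1 then ord_max |: liftB B else liftB B.

Variables (R : {set {set 'I_n}}) (B1 : {set 'I_n}).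
Hypothesis hB1 : B1 \in R.

Lemma mem_extendB B i : (widen i \in extendB B1 B) = (i \in B).
Proof.
have /negPf max_neq : widen i != ord_max by rewrite -val_eqE /= neq_ltn ltn_ord.
by rewrite /extendB; case: ifP; rewrite ?in_setU1 ?max_neq mem_liftB.
Qed.

Lemma ord_max_in_extendB B : (ord_max \in extendB B1 B) = (B == B1).
Proof.
rewrite /extendB; case: ifP => _; first by rewrite setU11.
exact: negbTE (ord_max_notin_liftB B).
Qed.

Lemma extendB_inj : injective (extendB B1).
Proof. by move=> B C eBC; apply/setP => i; rewrite -!mem_extendB eBC. Qed.

Lemma maxB_extendB B : maxB (extendB B1 B) = if B == B1 then n else maxB B.
Proof.
rewrite /extendB; case: ifP => _; last exact: maxB_liftB.
rewrite /maxB big_setU1 ?ord_max_notin_liftB //=.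
by apply/maxn_idPl; rewrite -/(maxB _) maxB_liftB maxB_le.
Qed.

Lemma arcb_extend_widen u v :
  arcb (extendB B1 @: R) (widen u, widen v) = arcb R (u, v).
Proof.
rewrite /arcb /=; congr andb; apply/existsP/existsP.
- move=> [C /and4P[/imsetP[B hB ->]]]; rewrite !mem_extendB => hu hv hgap.
  exists B; rewrite hB hu hv; apply/forallP => z; apply/implyP => hz.
  by move/forallP: hgap => /(_ (widen z)) /implyP; rewrite mem_extendB => /(_ hz).
- move=> [B /and4P[hB hu hv hgap]].
  exists (extendB B1 B); rewrite imset_f // !mem_extendB hu hv.
  apply/forallP => z; apply/implyP; case: (ord_max_or_widen z) => [->|[z' ->]].
    by move=> _; have := ltn_ord v; rewrite /=; lia.
  by rewrite mem_extendB => hz; move/forallP: hgap => /(_ z') /implyP /(_ hz).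
Qed.

Lemma arcb_extend_ord_max u :
  arcb (extendB B1 @: R) (widen u, ord_max) = (u \in B1) && (maxB B1 <= u).
Proof.
rewrite /arcb /= ltn_ord /=; apply/existsP/andP.
- move=> [C /and4P[/imsetP[B hB ->]]]; rewrite ord_max_in_extendB => hu /eqP eB.
  subst B; move: hu; rewrite mem_extendB => hu hgap; split => //.
  have [|z hz <-] := @maxB_mem _ B1; first by apply/set0Pn; exists u.
  by move/forallP: hgap => /(_ (widen z)); rewrite mem_extendB hz /= ltn_ord andbT -leqNgt.
- move=> [hu hmax]; exists (extendB B1 B1).
  rewrite imset_f // mem_extendB hu ord_max_in_extendB eqxx /=.
  apply/forallP => z; apply/implyP; case: (ord_max_or_widen z) => [->|[z' ->]].
    by rewrite ltnn andbF.
  by rewrite mem_extendB => /leq_maxB /=; lia.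
Qed.

Lemma nat_arcs_extend y : nat_arcs (extendB B1 @: R) y =
  nat_arcs R y || ((B1 != set0) && (y == (maxB B1, n))).
Proof.
apply/existsP/orP.
- move=> [[u v] /andP[+ /eqP <-]].
  case: (ord_max_or_widen v) => [->|[v' ->]]; case: (ord_max_or_widen u) => [->|[u' ->]].
  + by rewrite /arcb ltnn.
  + rewrite arcb_extend_ord_max => /andP[hu hmax]; right.
    apply/andP; split; first by apply/set0Pn; exists u'.
    by have := leq_maxB hu; rewrite /nat_arc /= => hle; apply/eqP; congr pair; lia.
  + by rewrite /arcb /= ltnNge (ltnW (ltn_ord v')).
  + by rewrite arcb_extend_widen -nat_arcsE => harc; left.
- move=> [/existsP[[u v] /andP[harc /eqP <-]]|/andP[/maxB_mem[z hz ez] /eqP ->]].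
  + by exists (widen u, widen v); rewrite arcb_extend_widen harc; apply/eqP.
  + by exists (widen z, ord_max); rewrite arcb_extend_ord_max hz -ez leqnn; apply/eqP.
Qed.

Lemma extendB_partition :
  (forall B C i, B \in R -> C \in R -> i \in B -> i \in C -> B = C) ->
  cover R = [set: 'I_n] -> (forall B, B \in R -> B != B1 -> B != set0) ->
  partition (extendB B1 @: R) [set: 'I_n.+1].
Proof.
move=> hdisj hcov hnz; apply/and3P; split.
- apply/eqP/setP => i; rewrite inE; apply/bigcupP.
  case: (ord_max_or_widen i) => [->|[i' ->]].
    by exists (extendB B1 B1); rewrite ?imset_f ?ord_max_in_extendB.
  have : i' \in cover R by rewrite hcov inE.
  by move/bigcupP => [B hB hi]; exists (extendB B1 B); rewrite ?imset_f ?mem_extendB.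
- apply/trivIsetP => _ _ /imsetP[B hB ->] /imsetP[C hC ->] hne.
  rewrite -setI_eq0; apply/eqP/setP => i; rewrite !inE.
  case: (ord_max_or_widen i) => [->|[i' ->]]; rewrite ?ord_max_in_extendB ?mem_extendB.
    by apply: contraNF hne => /andP[/eqP -> /eqP ->].
  by apply: contraNF hne => /andP[hiB hiC]; rewrite (hdisj _ _ _ hB hC hiB hiC).
- apply/imsetP => -[B hB e0]; case: (eqVneq B B1) => [eB|hne].
    by have := ord_max_in_extendB B; rewrite -e0 inE eB eqxx.
  have [i hi] := set0Pn _ (hnz B hB hne).
  by have := mem_extendB B i; rewrite -e0 inE hi.
Qed.

Lemma card_extendB : #|extendB B1 @: R| = #|R|.
Proof. exact/card_imset/extendB_inj. Qed.

Lemma blocks_above_extend x : x < n ->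
  blocks_above (extendB B1 @: R) x = blocks_above R x + (maxB B1 <= x).
Proof.
move=> hx; rewrite /blocks_above.
have -> : [set C in extendB B1 @: R | x < maxB C] =
          extendB B1 @: [set B in R | x < maxB (extendB B1 B)].
  apply/setP => C; rewrite inE; apply/andP/imsetP.
  - by move=> [/imsetP[B hB ->] h]; exists B; rewrite // inE hB.
  - by move=> [B]; rewrite inE => /andP[hB h] ->; rewrite imset_f.
rewrite (card_imset _ extendB_inj).
have -> : [set B in R | x < maxB (extendB B1 B)] = B1 |: [set B in R | x < maxB B].
  apply/setP => B; rewrite in_setU1 !inE maxB_extendB.
  by case: (eqVneq B B1) => [->|]; rewrite ?hB1 ?hx.
by rewrite cardsU1 addnC inE hB1 -leqNgt.
Qed.

End Extend.

Section AddElement.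
Variables (n : nat) (P : {set {set 'I_n}}).
Hypothesis partP : setpart P.

Section AddTo.
Variables (B0 : {set 'I_n}) (l : nat).
Hypotheses (hB0 : B0 \in P) (rankB0 : blockrank P B0 = l).

Lemma add_toE : add_to P l = extendB B0 @: P.
Proof.
apply: eq_in_imset => B hB; rewrite /extendB -rankB0.
by congr (if _ then _ else _); apply/eqP/eqP => [/blockrank_inj ->|->].
Qed.

Lemma setpart_add_to : setpart (add_to P l).
Proof.
rewrite /setpart add_toE; apply: extendB_partition => //.
- exact: block_eq.
- by case/and3P: partP => /eqP.
- by move=> B /(block_neq0 partP).
Qed.

Lemma card_add_to : #|add_to P l| = #|P|.
Proof. by rewrite add_toE card_extendB. Qed.

Lemma nat_arcs_add_to y : nat_arcs (add_to P l) y = nat_arcs P y || (y == (maxB B0, n)).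
Proof. by rewrite add_toE nat_arcs_extend // (block_neq0 partP hB0). Qed.

Lemma blocks_above_add_to x : x < n ->
  blocks_above (add_to P l) x = blocks_above P x + (maxB B0 <= x).
Proof. by move=> hx; rewrite add_toE blocks_above_extend. Qed.

Let arcs_below := @nat_arcs_lt n P.
Let no_arc_from_maxB := fun y => nat_arcs_not_from_maxB partP (y := y) hB0.
Let maxB0_lt := maxB_lt partP hB0.
Let rank_above := rank_le_blocks_above partP hB0 rankB0.
Let above_maxB0 := blocks_above_maxB partP hB0 rankB0.
Let l_gt0 : 0 < l. Proof. by rewrite -rankB0 blockrank_gt0. Qed.
Let l_le : l <= #|P|. Proof. by rewrite -rankB0 blockrank_le. Qed.

Lemma lab_add_to j : 0 < j ->
  lab (add_to P l) j =
    if (j == 1) || (lab P j.-1 <= l) then (minn (lab P j) l).+1 else lab P j.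
Proof.
move=> hj; apply: label_spec_uniq (label_specP _ hj) _; rewrite card_add_to.
apply: (label_spec_add_arc arcs_below no_arc_from_maxB nat_arcs_add_to maxB0_lt
          blocks_above_add_to rank_above above_maxB0 l_gt0 l_le hj (label_specP _ hj)).
by move=> hj1; apply: label_specP; lia.
Qed.

Lemma has_nesting_add_to m : 0 < m -> ~~ has_nesting P m.+1 ->
  has_nesting (add_to P l) m.+1 = (lab P m <= l).
Proof.
move=> hm /has_nestingP hn.
have no_start x : ~ starts_nesting (nat_arcs P) m.+1 x by move=> hx; apply: hn; exists x.
have := has_nesting_add_arc arcs_below no_arc_from_maxB nat_arcs_add_to maxB0_lt
  rank_above above_maxB0 l_gt0 l_le hm no_start (label_specP _ hm).
by move=> equiv; apply/has_nestingP/idP => /equiv.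
Qed.

End AddTo.

(* A new singleton is [n+1] added to an extra empty block. *)
Lemma add_singleE : add_single P = extendB set0 @: (set0 |: P).
Proof.
rewrite imsetU1 /add_single /extendB eqxx /liftB imset0 setU0; congr setU.
by apply: eq_in_imset => B /(block_neq0 partP) /negPf ->.
Qed.

Lemma setpart_add_single : setpart (add_single P).
Proof.
rewrite /setpart add_singleE; apply: (extendB_partition (setU11 _ _)) => //.
- move=> B C i; rewrite !in_setU1 => /predU1P[-> | hB]; first by rewrite inE.
  by move=> /predU1P[-> _ | hC]; [rewrite inE | exact: (block_eq partP hB hC)].
- apply/setP => i; rewrite inE; apply/bigcupP.
  case/and3P: partP => /eqP/setP/(_ i); rewrite inE => /bigcupP[B hB hi] _ _.
  by exists B; rewrite // in_setU1 hB orbT.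
Qed.

Lemma nat_arcs_add_single : nat_arcs (add_single P) =1 nat_arcs P.
Proof.
move=> y; rewrite add_singleE nat_arcs_extend ?setU11 // eqxx orbF.
apply: eq_existsb => a; congr andb; rewrite /arcb; congr andb.
apply/existsP/existsP => -[B /andP[hB h]]; last by exists B; rewrite in_setU1 hB orbT.
case/setU1P: hB => [eB | hB]; first by move: h; rewrite eB inE.
by exists B; rewrite hB.
Qed.

Lemma blocks_above_add_single x : x < n ->
  blocks_above (add_single P) x = (blocks_above P x).+1.
Proof.
move=> hx; rewrite add_singleE blocks_above_extend ?setU11 // maxB0 addn1; congr S.
apply: eq_card => B; rewrite !inE.
by case: (eqVneq B set0) => [->|] //=; rewrite maxB0 andbF.
Qed.

Lemma card_add_single : #|add_single P| = #|P|.+1.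
Proof.
case/and3P: partP => _ _ P0.
by rewrite add_singleE card_extendB ?cardsU1 ?P0.
Qed.

Lemma lab_add_single j : 0 < j -> lab (add_single P) j = (lab P j).+1.
Proof.
move=> hj; apply: label_spec_uniq (label_specP _ hj) _; rewrite card_add_single.
apply: (eq_label_spec (A := nat_arcs P)) => [y|]; first by rewrite nat_arcs_add_single.
apply: (label_spec_succ (c := n)) (label_specP _ hj) => //.
- by move=> y /nat_arcs_lt; lia.
- exact: blocks_above_add_single.
Qed.

Lemma has_nesting_add_single j : has_nesting (add_single P) j = has_nesting P j.
Proof.
have eqs x := eq_starts_nesting j x nat_arcs_add_single.
by apply/has_nestingP/has_nestingP => -[x /eqs hx]; exists x.
Qed.

End AddElement.

Lemma card_ord_between N a : a <= N -> #|[set i : 'I_N | 0 < i < a]| = a.-1.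
Proof.
move=> ha; rewrite cardsE cardE /enum_mem size_filter.
rewrite -(@count_map _ _ (@nat_of_ord N) (fun i => 0 < i < a)).
have enumE : enum 'I_N = Finite.enum 'I_N by apply: filter_predT.
rewrite -enumE val_enum_ord -(subnKC ha) iotaD count_cat add0n.
rewrite [count _ (iota a _)](eq_in_count (a2 := pred0)) ?count_pred0 => [|x]; last first.
  by rewrite mem_iota /=; lia.
case: a {ha} => [|a] //=; rewrite addn0.
by rewrite (eq_in_count (a2 := predT)) ?count_predT ?size_iota // => x; rewrite mem_iota /=; lia.
Qed.

Lemma lab_gt0 n (P : {set {set 'I_n}}) j : 0 < lab P j.
Proof. by rewrite /lab; case: has_nesting. Qed.

Lemma nth_label m n (P : {set {set 'I_n}}) j : j < m -> nth 0 (label m P) j = lab P j.+1.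
Proof. by move=> hj; rewrite /label (nth_map 0) ?size_iota // nth_iota. Qed.

Section Labels.
Variables (n : nat) (P : {set {set 'I_n}}).
Lemma lab_le j : 0 < j -> lab P j <= #|P|.+1.
Proof.
move=> hj; case: (label_specP P hj) => [[x [_ _ ->]]|[_ ->]] //.
by rewrite ltnS blocks_above_le.
Qed.

Lemma lab_mono i j : 0 < i -> i <= j -> lab P i <= lab P j.
Proof.
move=> hi; elim: j => [|j IH] hij; first by lia.
case: (eqVneq i j.+1) => [-> //|hne]; apply: leq_trans (IH _) _; first by lia.
have hj : 0 < j by lia.
exact: (@label_spec_mono _ _ _ j.+1 _ _ (blocks_above_mono P) (blocks_above_le P) hj
                        (label_specP P (ltn0Sn j)) (label_specP P hj)).
Qed.

Hypothesis partP : setpart P.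

Lemma lab_add_to_between j l i : 0 < i -> 0 < j -> 0 < l ->
  (j == 1) || (lab P j.-1 <= l) -> l < lab P j ->
  lab (add_to P l) i = if i < j then (lab P i).+1 else if i == j then l.+1 else lab P i.
Proof.
move=> hi hj hl hcond hlj.
have [|B0 hB0 rankB0] := blockrank_onto partP (l := l); first by have := lab_le hj; lia.
rewrite (lab_add_to partP hB0 rankB0 hi).
case: (ltngtP i j) => [hij|hji|->]; last by rewrite hcond; congr S; apply/minn_idPr; lia.
- have hil : lab P i <= l.
    by apply: leq_trans (lab_mono hi (_ : i <= j.-1)) _; case/orP: hcond; lia.
  have -> : (i == 1) || (lab P i.-1 <= l).
    by case: (eqVneq i 1) => //= hi1; apply: leq_trans (lab_mono _ _) hil; lia.
  by congr S; apply/minn_idPl.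
- have -> : (i == 1) = false by lia.
  by rewrite /= leqNgt (leq_trans hlj (lab_mono _ _)) //; lia.
Qed.

Lemma add_to_inj l l' : 1 <= l <= #|P| -> 1 <= l' <= #|P| ->
  add_to P l = add_to P l' -> l = l'.
Proof.
move=> /(blockrank_onto partP) [B hB <-] /(blockrank_onto partP) [B' hB' <-].
rewrite (add_toE partP hB erefl) (add_toE partP hB' erefl) => e.
have /imsetP[C hC eC] : extendB B B \in extendB B' @: P by rewrite -e imset_f.
have /eqP eCB' : C == B' by rewrite -(ord_max_in_extendB B') -eC ord_max_in_extendB.
subst C; have eBB' : B = B' by apply/setP => i; rewrite -(mem_extendB B) eC mem_extendB.
by rewrite eBB'.
Qed.

End Labels.

Section Children.
Variables (m n : nat) (P : {set {set 'I_n}}).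
Hypotheses (m_gt0 : 0 < m) (PiP : PiM m P).

Let partP : setpart P. Proof. by case/andP: PiP. Qed.
Let no_nesting : ~~ has_nesting P m.+1. Proof. by case/andP: PiP. Qed.

Lemma PiM_add_single : PiM m (add_single P).
Proof. by rewrite /PiM (setpart_add_single partP) (has_nesting_add_single partP) no_nesting. Qed.

Lemma PiM_add_to l : 1 <= l <= #|P| -> PiM m (add_to P l) = (l < lab P m).
Proof.
move=> /(blockrank_onto partP) [B0 hB0 rankB0].
by rewrite /PiM (setpart_add_to partP hB0 rankB0) (has_nesting_add_to partP hB0 rankB0) // ltnNge.
Qed.

Lemma PiM_children :
  [set Q in children P | PiM m Q] =
  add_single P |: [set add_to P l | l : 'I_n.+1 in [set l : 'I_n.+1 | 0 < l < lab P m]].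
Proof.
have lab_le_m := lab_le P m_gt0.
apply/setP => Q; rewrite !inE; case: (eqVneq Q (add_single P)) => [->|_] /=.
  by rewrite PiM_add_single.
apply/andP/imsetP => [[/imsetP[l hl ->]]|[l hl ->]].
  by rewrite inE in hl; rewrite PiM_add_to // => hlm; exists l; rewrite // inE; lia.
rewrite inE in hl; have hlP : 1 <= l <= #|P| by lia.
by rewrite PiM_add_to //; split; [apply/imsetP; exists l; rewrite // inE | lia].
Qed.

Lemma card_PiM_children : #|[set Q in children P | PiM m Q]| = lab P m.
Proof.
have lab_le_m := lab_le P m_gt0.
have in_range l : l \in [set l : 'I_n.+1 | 0 < l < lab P m] -> 1 <= l <= #|P|.
  by rewrite inE; lia.
rewrite PiM_children cardsU1 card_in_imset; last first.
  by move=> l l' /in_range hl /in_range hl' /(add_to_inj partP hl hl') /val_inj.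
have -> : add_single P \notin [set add_to P l | l : 'I_n.+1 in [set l : 'I_n.+1 | 0 < l < lab P m]].
  apply/imsetP => -[l /in_range hl e].
  have [B0 hB0 rankB0] := blockrank_onto partP hl.
  have := congr1 (fun Q : {set {set 'I_n.+1}} => #|Q|) e.
  by rewrite (card_add_single partP) (card_add_to partP hB0 rankB0); lia.
rewrite card_ord_between; first by rewrite add1n prednK ?lab_gt0.
by apply: leq_trans lab_le_m _; rewrite ltnS card_setpart_le.
Qed.

End Children.

Section LabelsOfChildren.
Variables (m n : nat) (P : {set {set 'I_n}}).
Hypothesis partP : setpart P.

Lemma label_add_single : label m (add_single P) = [seq x.+1 | x <- label m P].
Proof.
rewrite /label -map_comp; apply/eq_in_map => j; rewrite mem_iota => hj.
by rewrite /= lab_add_single //; lia.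
Qed.

Lemma label_add_to j l : 1 <= j <= m -> 0 < l ->
  (j == 1) || (lab P j.-1 <= l) -> l < lab P j ->
  label m (add_to P l) =
    [seq x.+1 | x <- take j.-1 (label m P)] ++ l.+1 :: drop j (label m P).
Proof.
move=> hj hl hcond hlj.
have iotaE : iota 1 m = iota 1 j.-1 ++ j :: iota j.+1 (m - j).
  by rewrite -[in LHS](_ : j.-1 + (m - j).+1 = m) ?iotaD ?add1n ?prednK //; lia.
have size_pre : size [seq lab P i | i <- iota 1 j.-1] = j.-1 by rewrite size_map size_iota.
rewrite /label iotaE !map_cat /= take_size_cat // drop_cat size_pre ltnNge leq_pred /=.
rewrite (_ : j - j.-1 = 1); last by lia.
rewrite drop1 /= -map_comp; congr (_ ++ _ :: _).
- apply/eq_in_map => i; rewrite mem_iota => hi /=.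
  by rewrite (lab_add_to_between partP (i := i) _ _ hl hcond hlj) ?ifT //; lia.
- by rewrite (lab_add_to_between partP _ _ hl hcond hlj) ?ltnn ?eqxx //; lia.
- apply/eq_in_map => i; rewrite mem_iota => hi.
  by rewrite (lab_add_to_between partP (i := i) _ _ hl hcond hlj) ?ifF //; lia.
Qed.

End LabelsOfChildren.

Unset Implicit Arguments.

Theorem proposition1 (m n : nat) (P : {set {set 'I_n}}) :
  1 <= m -> PiM m P ->
  let a := label m P in
  #|[set Q in children P | PiM m Q]| = nth 0 a m.-1 /\
  PiM m (add_single P) /\
  (forall l : nat, 1 <= l <= #|P| ->
     PiM m (add_to P l) = (l <= (nth 0 a m.-1).-1)) /\
  label m (add_single P) = [seq x.+1 | x <- a] /\
  (forall l : nat, 1 <= l <= (nth 0 a 0).-1 ->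
     label m (add_to P l) = l.+1 :: behead a) /\
  (forall (j l : nat), 2 <= j <= m ->
     nth 0 a (j.-2) <= l <= (nth 0 a j.-1).-1 ->
     label m (add_to P l) =
       [seq x.+1 | x <- take j.-1 a] ++ l.+1 :: drop j a).
Proof.
move=> m_gt0 PiP a; rewrite {}/a.
have partP : setpart P by case/andP: PiP.
have nth_lab j : 0 < j <= m -> nth 0 (label m P) j.-1 = lab P j.
  by move=> hj; rewrite nth_label ?prednK //; lia.
have pred_lab j l : (l <= (lab P j).-1) = (l < lab P j).
  by rewrite -ltnS prednK ?lab_gt0.
rewrite !nth_lab ?m_gt0 ?leqnn //.
split; first exact: card_PiM_children.
split; first exact: PiM_add_single.
split; first by move=> l hl; rewrite pred_lab PiM_add_to.
split; first exact: label_add_single.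
split.
  move=> l; rewrite (nth_lab 1) ?m_gt0 // pred_lab => hl.
  case/andP: hl => l_gt0 hl.
  by rewrite (@label_add_to m _ P partP 1 l) ?m_gt0 ?take0 ?drop1.
move=> j l hj; rewrite !nth_lab ?pred_lab; try lia.
move=> /andP[hl hlj]; apply: label_add_to; rewrite ?hl ?orbT //; try lia.
by apply: leq_trans hl; apply: lab_gt0.
Qed.
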